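(* Let $\mathcal{M}$ be either $\mathcal{M}^{gen}$ or $\mathcal{M}^{inj}$, let $\Omega$ be a finite collection of finite metric spaces, and let $\mathfrak{C}=\mathfrak{C}^\Omega$ be the clustering functor on $\mathcal{M}$ represented by $\Omega$. Then $\mathfrak{C}=\mathfrak{R}_1\circ\mathfrak{T}^\Omega$; that is, for every finite metric space $(X,d_X)$, two points $x,x'\in X$ lie in the same block of $\mathfrak{C}^\Omega(X,d_X)$ if and only if there exist $x_0,\ldots,x_k\in X$ with $x_0=x$, $x_k=x'$ and $d_X^\Omega(x_i,x_{i+1})\leq 1$ for all $i$.
   Context: $\mathcal{M}^{gen}$ is the category whose objects are finite metric spaces and whose morphisms are distance non-increasing maps ($d_Y(f(x),f(x'))\leq d_X(x,x')$); $\mathcal{M}^{inj}$ has the same objects and as morphisms the injective distance non-increasing maps. For a collection $\Omega$ of finite metric spaces, $\mathfrak{C}^\Omega$ assigns to a finite metric space $X$ the partition in which $x,x'$ lie in the same block iff there exist $z_0,\ldots,z_k\in X$ with $z_0=x$, $z_k=x'$, spaces $\omega_1,\ldots,\omega_k\in\Omega$, points $\alpha_i,\beta_i\in\omega_i$ and morphisms $f_i\in\mathrm{Mor}_{\mathcal{M}}(\omega_i,X)$ with $f_i(\alpha_i)=z_{i-1}$, $f_i(\beta_i)=z_i$. For $\lambda>0$, $\lambda\cdot\omega$ denotes $(\omega,\lambda d_\omega)$. Define $W_X^\Omega:X\times X\to[0,+\infty]$ by $W_X^\Omega(x,x)=0$ and, for $x\neq x'$, $W_X^\Omega(x,x')=\inf\{\lambda>0:\exists\,\omega\in\Omega,\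 \phi\in\mathrm{Mor}_{\mathcal{M}}(\lambda\cdot\omega,X)\text{ with }\{x,x'\}\subset\mathrm{im}(\phi)\}$ (infimum of the empty set is $+\infty$). Define $d_X^\Omega(x,x')=\min\{\max_i W_X^\Omega(x_i,x_{i+1}):x_0=x,\ldots,x_k=x'\text{ in }X\}$ (the maximal subdominant ultrametric of $W_X^\Omega$); $\mathfrak{T}^\Omega(X,d_X)=(X,d_X^\Omega)$. $\mathfrak{R}_1$ assigns to a (possibly extended) metric space the partition into equivalence classes of chains with consecutive distances $\leq 1$. *)

From Stdlib Require Import List.
From HB Require Import structures.
From mathcomp Require Import all_boot all_order all_algebra.
From mathcomp Require Import boolp classical_sets reals constructive_ereal ereal.
Set Implicit Arguments. Unset Strict Implicit. Unset Printing Implicit Defensive.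
Import Order.TTheory GRing.Theory Num.Theory.
Local Open Scope ring_scope.
Local Open Scope classical_set_scope.

Record fmet (R : realType) := FMet {
  pt : finType;
  dist : pt -> pt -> R;
  dist0 : forall x y, dist x y = 0 <-> x = y;
  distC : forall x y, dist x y = dist y x;
  distT : forall x y z, dist x z <= dist x y + dist y z
}.

(* Morphisms: distance non-increasing maps (category M^gen, inj = false)
   or injective distance non-increasing maps (category M^inj, inj = true),
   stated for arbitrary distance functions dA on the source and dB on the
   target (so that morphisms out of a rescaled space lambda.omega can be
   written with dA := fun a b => lambda * dist omega a b). *)
Definition is_mor (R : realType) (inj : bool) (A B : finType)
  (dA : A -> A -> R) (dB : B -> B -> R) (f : A -> B) : Prop :=
  (forall a a', dB (f a) (f a') <= dA a a') /\ (inj -> injective f).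

Fixpoint links (T : Type) (r : T -> T -> Prop) (x : T) (s : seq T) : Prop :=
  match s with
  | [::] => True
  | y :: s' => r x y /\ links r y s'
  end.

Definition Chain (T : Type) (r : T -> T -> Prop) (x x' : T) : Prop :=
  exists s : seq T, last x s = x' /\ links r x s.

Definition clusterC (R : realType) (inj : bool) (Om : seq (fmet R))
  (X : fmet R) (x x' : pt X) : Prop :=
  Chain (fun z z' => exists om : fmet R, In om Om /\
           exists (a b : pt om) (f : pt om -> pt X),
             is_mor inj (@dist R om) (@dist R X) f /\ f a = z /\ f b = z')
        x x'.

Arguments clusterC {R} inj Om X x x'.

Definition WOm (R : realType) (inj : bool) (Om : seq (fmet R))
  (X : fmet R) (x x' : pt X) : \bar R :=
  if x == x' then 0%E else
  ereal_inf [set (l%:E)%E | l in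
    [set l : R | 0 < l /\ exists om : fmet R, In om Om /\
       exists phi : pt om -> pt X,
         is_mor inj (fun a b => l * dist a b) (@dist R X) phi /\
         (exists a, phi a = x) /\ (exists b, phi b = x')]].

Arguments WOm {R} inj Om X x x'.

Fixpoint chain_max (T : Type) (R : realType) (W : T -> T -> \bar R)
  (x : T) (s : seq T) : \bar R :=
  match s with
  | [::] => 0%E
  | y :: s' => Order.max (W x y) (chain_max W y s')
  end.

(* d_X^Omega: maximal subdominant ultrametric of W_X^Omega
   (min over chains; written as an infimum, which is attained) *)
Definition dOm (R : realType) (inj : bool) (Om : seq (fmet R))
  (X : fmet R) (x x' : pt X) : \bar R :=
  ereal_inf [set chain_max (WOm inj Om X) x s | s in
              [set s : seq (pt X) | last x s = x']].

Arguments dOm {R} inj Om X x x'.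

Definition R1TOm (R : realType) (inj : bool) (Om : seq (fmet R))
  (X : fmet R) (x x' : pt X) : Prop :=
  Chain (fun z z' => (dOm inj Om X z z' <= 1%:E)%E) x x'.

Arguments R1TOm {R} inj Om X x x'.

From mathcomp Require Import all_boot all_order all_algebra.
From mathcomp Require Import boolp classical_sets reals constructive_ereal ereal.
Set Implicit Arguments. Unset Strict Implicit. Unset Printing Implicit Defensive.
Import Order.TTheory GRing.Theory Num.Theory.
Local Open Scope ring_scope.
Local Open Scope classical_set_scope.

(** A link of the clustering (a morphism from some [om] hitting both points)
  is a map [1.om -> X], so [W <= 1] on it.  Conversely, since [Om] and [X]
  are finite, the ratios [d_X(p,q) / d_om(c,e)] exceeding 1 are bounded away
  from 1, say by [m > 1]; a morphism [l.om -> X] with [l < m] then cannot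
  expand any distance of [om], so it is already a morphism [om -> X].  Hence
  [W(p,q) < m] forces [p = q] or a link, and a chain with [d^Om <= 1 < m]
  refines into a chain of links. *)

Lemma links_cat (T : Type) (r : T -> T -> Prop) x s1 s2 :
  links r x s1 -> links r (last x s1) s2 -> links r x (s1 ++ s2).
Proof. by elim: s1 x => [|y s IH] x //= [rxy ys1] ys2; split => //; apply: IH. Qed.

Lemma Chain_refl (T : Type) (r : T -> T -> Prop) x : Chain r x x.
Proof. by exists [::]. Qed.

Lemma Chain_step (T : Type) (r : T -> T -> Prop) x y : r x y -> Chain r x y.
Proof. by move=> rxy; exists [:: y]. Qed.

Lemma Chain_trans (T : Type) (r : T -> T -> Prop) x y z :
  Chain r x y -> Chain r y z -> Chain r x z.
Proof.
move=> [s1 [<- xs1]] [s2 [<- ys2]]; exists (s1 ++ s2).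
by rewrite last_cat; split => //; apply: links_cat.
Qed.

Lemma Chain_bind (T : Type) (r r' : T -> T -> Prop) x y :
  (forall a b, r a b -> Chain r' a b) -> Chain r x y -> Chain r' x y.
Proof.
move=> rr' [s [<- xs]]; elim: s x xs => [|z s IH] x /=; first by move=> _; apply: Chain_refl.
by case=> /rr' xz zs; apply: Chain_trans xz (IH _ zs).
Qed.

Lemma links_chain_max_lt (T : Type) (R : realType) (W : T -> T -> \bar R) c x s :
  (chain_max W x s < c)%E -> links (fun p q => W p q < c)%E x s.
Proof. by elim: s x => [|y s IH] x //=; rewrite gt_max => /andP[Wxy /IH]. Qed.

Lemma gt1_lower_bound (R : realDomainType) (T : finType) (f : T -> R) :
  exists2 m, 1 < m & forall t, 1 < f t -> m <= f t.
Proof.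
exists (\big[Num.min/2]_(t | 1 < f t) f t); last by move=> t; apply: bigmin_le_cond.
by apply: lt_bigmin => //; rewrite ltr1n.
Qed.

Lemma seq_gt1_witness (R : realDomainType) (I : Type) (s : seq I) (P : I -> R -> Prop) :
  (forall i m m', m' <= m -> P i m -> P i m') ->
  (forall i, exists2 m, 1 < m & P i m) ->
  exists2 m, 1 < m & forall i, List.In i s -> P i m.
Proof.
move=> Pdown Pex; elim: s => [|j s [m m1 Ps]]; first by exists 2; rewrite ?ltr1n.
have [mj mj1 Pj] := Pex j.
exists (Num.min m mj); first by rewrite lt_min m1 mj1.
move=> i /= [<-|si]; first by apply: Pdown Pj; rewrite ge_min lexx orbT.
by apply: Pdown (Ps _ si); rewrite ge_min lexx.
Qed.

Lemma dist_xx (R : realType) (X : fmet R) (a : pt X) : dist a a = 0.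
Proof. exact/dist0. Qed.

Lemma dist_ge0 (R : realType) (X : fmet R) (a b : pt X) : 0 <= dist a b.
Proof.
by have := distT a b a; rewrite dist_xx [dist b a]distC -mulr2n pmulrn_lge0.
Qed.

Section Clustering.
Variables (R : realType) (inj : bool) (X : fmet R).

Lemma rescaled_mor_is_mor (om : fmet R) :
  exists2 m, 1 < m & forall l (phi : pt om -> pt X), l < m ->
    is_mor inj (fun a b => l * dist a b) (@dist R X) phi ->
    is_mor inj (@dist R om) (@dist R X) phi.
Proof.
have [m m1 ratio_ge] := gt1_lower_bound
  (fun t : pt X * pt X * pt om * pt om => let: (p, q, c, e) := t in dist p q / dist c e).
exists m => // l phi lm [phi_le phi_inj]; split => // c e.
rewrite leNgt; apply/negP => expand.
have ce_gt0 : 0 < dist c e.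
  rewrite lt_def dist_ge0 andbT; apply/eqP => /dist0 ce.
  by move: expand; rewrite ce !dist_xx ltxx.
have := ratio_ge (phi c, phi e, c, e); rewrite ltr_pdivlMr // mul1r => /(_ expand).
by rewrite ler_pdivlMr // => /le_trans/(_ (phi_le c e)); rewrite ler_pM2r // leNgt lm.
Qed.

Variable Om : seq (fmet R).

Definition omega_link (z z' : pt X) := exists om : fmet R, List.In om Om /\
  exists (a b : pt om) (f : pt om -> pt X),
    is_mor inj (@dist R om) (@dist R X) f /\ f a = z /\ f b = z'.

Lemma omega_link_dOm_le1 z z' : omega_link z z' -> (dOm inj Om X z z' <= 1%:E)%E.
Proof.
move=> [om [Om_om [a [b [f [[f_le f_inj] [fa fb]]]]]]].
apply: le_trans (ereal_inf_lbound _) _; first by exists [:: z'].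
rewrite /= ge_max lee01 andbT /WOm; case: eqP => // _.
apply: ereal_inf_lbound; exists 1 => //; split => //; exists om; split => //.
exists f; split; last by split; [exists a | exists b].
by split => // c e; rewrite mul1r.
Qed.

Lemma WOm_lt_omega_link : exists2 m, 1 < m & forall p q,
  (WOm inj Om X p q < m%:E)%E -> p = q \/ omega_link p q.
Proof.
have [m m1 Om_mor] := @seq_gt1_witness R _ Om
  (fun om m => forall l (phi : pt om -> pt X), l < m ->
     is_mor inj (fun a b => l * dist a b) (@dist R X) phi ->
     is_mor inj (@dist R om) (@dist R X) phi)
  (fun om m m' m'm Pm l phi lm' => Pm l phi (lt_le_trans lm' m'm))
  rescaled_mor_is_mor.
exists m => // p q; rewrite /WOm; case: eqP => [-> _|_]; first by left.
move=> /ereal_inf_lt[_ [l [_ [om [Om_om [phi [phi_mor [[a pa] [b qb]]]]]]]] <-].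
rewrite lte_fin => lm; right; exists om; split => //.
by exists a, b, phi; split => //; apply: Om_mor phi_mor.
Qed.

End Clustering.

Theorem mainTheorem4 (R : realType) (inj : bool) (Om : seq (fmet R))
  (X : fmet R) (x x' : pt X) :
  clusterC inj Om X x x' <-> R1TOm inj Om X x x'.
Proof.
split; apply: Chain_bind => z z'.
  by move=> /omega_link_dOm_le1 dzz'; apply: Chain_step.
have [m m1 W_link] := WOm_lt_omega_link inj X Om.
move=> dzz'; have : (dOm inj Om X z z' < m%:E)%E by apply: le_lt_trans dzz' _.
case/ereal_inf_lt=> _ [s ends <-] Wmax_lt.
have Wlinks := @links_chain_max_lt _ _ (WOm inj Om X) _ _ _ Wmax_lt.
apply: (@Chain_bind _ (fun p q => WOm inj Om X p q < m%:E)%E); last by exists s.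
by move=> p q /W_link [->|pq]; [apply: Chain_refl | apply: Chain_step].
Qed.
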